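(* Let $w,c\ge 0$ and let $(W_1,\ldots,W_n)$ be a $w$-colourable grading of a graph $G$. Let $H$ be a subgraph of $G$ (not necessarily induced) with $\chi(H)>w+2(c+\chi^1(G))$. Then there is an edge $uv$ of $H$ and a subset $X$ of $V(G)$ such that: $G[X]$ is connected; $u,v$ are both earlier than every vertex in $X$; exactly one of $u,v$ has a $G$-neighbour in $X$; and $\chi(X)>c$.
   Context: Graphs are finite and simple. For $X\subseteq V(G)$, $\chi(X)$ means $\chi(G[X])$. A grading of $G$ is a sequence $(W_1,\ldots,W_n)$ of pairwise disjoint subsets of $V(G)$ with union $V(G)$; it is $w$-colourable if $\chi(G[W_i])\le w$ for all $i$. A vertex $u$ is earlier than $v$ if $u\in W_i$, $v\in W_j$ with $i<j$. For $v\in V(G)$ and integer $\rho\ge 0$, $N^{\rho}[v]$ is the set of vertices at distance at most $\rho$ from $v$ in $G$; for $\rho\ge1$, $\chi^{\rho}(G)$ is the maximum of $\chi(N^{\rho}[v])$ over all $v\in V(G)$ (and $0$ for the null graph). *)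

(* A simple graph on a finite vertex type T is a symmetric
   irreflexive relation e : rel T (symmetry/irreflexivity are hypotheses of
   the main theorem). *)
From mathcomp Require Import all_boot.
Set Implicit Arguments. Unset Strict Implicit. Unset Printing Implicit Defensive.

Section Defs.
Variable T : finType.

(* The side condition x != y is vacuous for irreflexive e; it only
   makes the definition total for arbitrary relations. *)
Definition colourableb (e : rel T) (X : {set T}) (k : nat) : bool :=
  [exists f : {ffun T -> 'I_k},
     [forall x, forall y,
        [&& x \in X, y \in X, x != y & e x y] ==> (f x != f y)]].

Lemma colourable_exists (e : rel T) (X : {set T}) :
  exists k, colourableb e X k.
Proof.
exists #|T|; apply/existsP; exists [ffun x => enum_rank x].
apply/forallP => x; apply/forallP => y; apply/implyP => /and4P [_ _ nxy _].
rewrite !ffunE; apply: contra nxy => /eqP /enum_rank_inj ->; exact: eqxx.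
Qed.

Definition chi (e : rel T) (X : {set T}) : nat :=
  ex_minn (colourable_exists e X).

Definition closed_nbhd (e : rel T) (v : T) : {set T} := v |: [set u | e v u].

(* chi^1(G) = max over v of chi(N^1[v]); 0 for the null graph *)
Definition chi1 (e : rel T) : nat := \max_(v : T) chi e (closed_nbhd e v).

Definition induced_connected (e : rel T) (X : {set T}) : Prop :=
  X != set0 /\
  forall x y, x \in X -> y \in X ->
    connect [rel a b | [&& a \in X, b \in X & e a b]] x y.

Definition grading (n : nat) (W : 'I_n -> {set T}) : Prop :=
  (forall i j : 'I_n, i != j -> [disjoint W i & W j]) /\
  \bigcup_(i < n) W i = [set: T].

Definition w_colourable_grading (e : rel T) (w n : nat) (W : 'I_n -> {set T})
  : Prop := grading W /\ forall i, chi e (W i) <= w.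

Definition earlier (n : nat) (W : 'I_n -> {set T}) (u v : T) : Prop :=
  exists i j : 'I_n, [/\ i < j, u \in W i & v \in W j].

Definition subgraph (e : rel T) (VH : {set T}) (h : rel T) : Prop :=
  (forall x y, h x y -> [/\ x \in VH, y \in VH & e x y]) /\ symmetric h.

Definition has_nbr_in (e : rel T) (u : T) (X : {set T}) : bool :=
  [exists x in X, e u x].

End Defs.

(* Suppose no edge of H is as required: for every edge uv of H and every connected
   X later than u and v with chi(X) > c, u has a neighbour in X iff v has one.
   We colour H with (c + chi^1) + chi^1 + w colours, in three classes.
   - u is anchored if, for some level k >= level u, a neighbour x of u later than
     k is adjacent to a component of chi > c of the vertices later than k and
     non-adjacent to u.  By the assumption, both ends of an edge of H below level
     k see the same such components, so H-adjacent anchored vertices can be given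
     a common anchor x and coloured inside N[x].
   - x is covered if, for some level i, its component C among the vertices later
     than i has a neighbour u of level i that is not anchored.  For the least
     such i, C is shared by adjacent covered vertices, and chi(C) <= c + chi^1:
     C meets N[u] in a set of chi <= chi^1, and every component of C - N(u) has
     chi <= c, since otherwise u would be anchored at level i.
   - Adjacent vertices that are neither anchored nor covered lie on the same
     level, as the later one would be covered; the grading colours them. *)

From mathcomp Require Import all_boot.
From Stdlib Require Import Classical.
From mathcomp Require Import zify.
Set Implicit Arguments. Unset Strict Implicit. Unset Printing Implicit Defensive.

Section Colouring.
Variable T : finType.
Implicit Types (r : rel T) (X A B : {set T}).

Lemma chi_colourable r X : colourableb r X (chi r X).
Proof. by rewrite /chi; case: ex_minnP. Qed.

Lemma chi_le_colourable r X k : colourableb r X k -> chi r X <= k.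
Proof. by rewrite /chi; case: ex_minnP => m _; apply. Qed.

Definition chi_colour r X (x : T) : nat :=
  xchoose (elimT existsP (chi_colourable r X)) x.

Lemma chi_colour_lt r X x : chi_colour r X x < chi r X.
Proof. exact: ltn_ord. Qed.

Lemma chi_colour_proper r X x y : x \in X -> y \in X -> x != y -> r x y ->
  chi_colour r X x != chi_colour r X y.
Proof.
move=> Xx Xy xy rxy.
have /forallP/(_ x)/forallP/(_ y) := xchooseP (elimT existsP (chi_colourable r X)).
by rewrite Xx Xy xy rxy.
Qed.

(* Colourings are functions on all of [T], so [chi r set0 = 1] unless [T] is
   empty; hence the nonemptiness side conditions below. *)
Lemma chi_gt0 (t0 : T) r X : 0 < chi r X.
Proof.
have /existsP [] := chi_colourable r X.
by case: (chi r X) => // f _; case: (f t0).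
Qed.

Lemma chi_eq0 r X : #|T| = 0 -> chi r X = 0.
Proof.
move=> T0; apply/eqP; rewrite -leqn0; apply: chi_le_colourable; apply/existsP.
exists [ffun x => cast_ord T0 (enum_rank x)]; apply/forallP => x.
by case: (cast_ord T0 (enum_rank x)).
Qed.

Lemma chi_le_colouring r X k (f : T -> nat) : 0 < k ->
  (forall x, x \in X -> f x < k) ->
  (forall x y, x \in X -> y \in X -> x != y -> r x y -> f x != f y) ->
  chi r X <= k.
Proof.
case: k => // k _ f_lt f_proper; apply: chi_le_colourable; apply/existsP.
exists [ffun x => inord (f x)]; apply/forallP => x; apply/forallP => y.
apply/implyP => /and4P [Xx Xy xy rxy]; rewrite !ffunE.
apply: contra (f_proper x y Xx Xy xy rxy) => /eqP/(congr1 val).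
by rewrite /= !inordK ?f_lt // => ->.
Qed.

Lemma chi_mono r r' A B : subrel r r' -> A \subset B -> chi r A <= chi r' B.
Proof.
move=> rr' /subsetP AB; apply: chi_le_colourable.
have /existsP [f /forallP f_ok] := chi_colourable r' B.
apply/existsP; exists f; apply/forallP => x; apply/forallP => y.
apply/implyP => /and4P [Ax Ay xy /rr' rxy].
by have /forallP/(_ y) := f_ok x; rewrite !AB // xy rxy.
Qed.

Lemma chi_subset r A B : A \subset B -> chi r A <= chi r B.
Proof. exact: chi_mono. Qed.

Lemma chi_setU r A B : chi r (A :|: B) <= chi r A + chi r B.
Proof.
have /existsP [fA /forallP okA] := chi_colourable r A.
have /existsP [fB /forallP okB] := chi_colourable r B.
apply: chi_le_colourable; apply/existsP.
exists [ffun x => if x \in A then lshift _ (fA x) else rshift _ (fB x)].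
apply/forallP => x; apply/forallP => y; apply/implyP => /and4P [].
rewrite !inE !ffunE => ABx ABy xy rxy.
case Ax: (x \in A); case Ay: (y \in A);
  rewrite ?eq_lshift ?eq_rshift ?eq_lrshift ?eq_rlshift //.
- by have /forallP/(_ y) := okA x; rewrite Ax Ay xy rxy.
- have Bx : x \in B by rewrite Ax in ABx.
  have By : y \in B by rewrite Ay in ABy.
  by have /forallP/(_ y) := okB x; rewrite Bx By xy rxy.
Qed.

Lemma chi_blocks r X (blk : T -> {set T}) k : 0 < k ->
  (forall x, x \in X -> x \in blk x) ->
  (forall x y, x \in X -> y \in X -> r x y -> blk x = blk y) ->
  (forall x, x \in X -> chi r (blk x) <= k) ->
  chi r X <= k.
Proof.
move=> k_gt0 blk_self blk_edge blk_chi.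
apply: (@chi_le_colouring r X k (fun x => chi_colour r (blk x) x)) => //.
  by move=> x Xx; apply: leq_trans (chi_colour_lt _ _ _) (blk_chi x Xx).
move=> x y Xx Xy xy rxy; have blk_xy := blk_edge x y Xx Xy rxy.
rewrite blk_xy; apply: chi_colour_proper; rewrite ?blk_self //.
by rewrite -blk_xy blk_self.
Qed.

End Colouring.

Lemma chi_closed_nbhd_le (T : finType) (e : rel T) v :
  chi e (closed_nbhd e v) <= chi1 e.
Proof. exact: (@leq_bigmax _ (fun v => chi e (closed_nbhd e v)) v). Qed.

Lemma chi1_gt0 (T : finType) (t0 : T) (e : rel T) : 0 < chi1 e.
Proof. exact: leq_trans (chi_gt0 t0 _ _) (chi_closed_nbhd_le e t0). Qed.

Lemma connect_forward_closed (T : finType) (r : rel T) (C : {set T}) :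
  (forall a b, a \in C -> r a b -> b \in C) ->
  forall y z, y \in C -> connect r y z -> z \in C.
Proof.
move=> C_closed y z Cy /connectP [p r_p ->].
by elim: p y Cy r_p => //= a p IHp y Cy /andP [/(C_closed _ _ Cy) Ca /IHp]; apply.
Qed.

Section Components.
Variables (T : finType) (e : rel T).
Hypothesis e_sym : symmetric e.
Implicit Types (A B N X : {set T}).

Definition induced_rel A : rel T := [rel a b | [&& a \in A, b \in A & e a b]].
Arguments induced_rel A /.

Definition component A x : {set T} := [set y in A | connect (induced_rel A) x y].

Lemma induced_rel_sym A : symmetric (induced_rel A).
Proof. by move=> a b; rewrite /= e_sym andbCA. Qed.

Lemma mem_component A x : x \in A -> x \in component A x.
Proof. by move=> Ax; rewrite inE Ax connect0. Qed.

Lemma component_sub A x : component A x \subset A.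
Proof. by apply/subsetP => y /setIdP []. Qed.

Lemma component_closed A x y z :
  y \in component A x -> z \in A -> e y z -> z \in component A x.
Proof.
move=> /setIdP [Ay xy] Az yz; rewrite inE Az.
by apply: connect_trans xy (connect1 _); rewrite /= Ay Az yz.
Qed.

Lemma component_eq A x y : y \in component A x -> component A y = component A x.
Proof.
move=> /setIdP [_ xy]; apply/setP => z; rewrite !inE; case: (z \in A) => //=.
apply/idP/idP => [yz | xz]; first exact: connect_trans xy yz.
by rewrite (sym_connect_sym (induced_rel_sym A)) in xy; apply: connect_trans xy xz.
Qed.

Lemma component_connected A x : x \in A -> induced_connected e (component A x).
Proof.
move=> Ax; split; first by apply/set0Pn; exists x; apply: mem_component.
set C := component A x.
have from_x y : y \in C -> connect (induced_rel C) x y.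
  pose D := [set z in C | connect (induced_rel C) x z].
  have D_closed a b : a \in D -> induced_rel A a b -> b \in D.
    move=> /setIdP [Ca xa] /and3P [_ Ab ab]; have Cb := component_closed Ca Ab ab.
    by rewrite inE Cb; apply: connect_trans xa (connect1 _); rewrite /= Ca Cb ab.
  have Dx : x \in D by rewrite inE connect0 andbT mem_component.
  by move=> /setIdP [_ /(connect_forward_closed D_closed Dx)] /setIdP [].
move=> y z Cy Cz; apply: connect_trans (from_x z Cz).
by rewrite (sym_connect_sym (induced_rel_sym C)) from_x.
Qed.

Lemma connected_sub_component A X x :
  induced_connected e X -> X \subset A -> x \in X -> X \subset component A x.
Proof.
move=> [_ X_conn] /subsetP XA Xx; apply/subsetP => y Xy; rewrite inE XA //=.
apply: connect_sub (X_conn x y Xx Xy) => a b /and3P [Xa Xb ab].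
by apply: connect1; rewrite /= !XA.
Qed.

Lemma component_subset A B x : A \subset B -> component A x \subset component B x.
Proof.
move=> /subsetP AB; apply/subsetP => y /setIdP [Ay xy]; rewrite inE AB //=.
apply: connect_sub xy => a b /and3P [Aa Ab ab].
by apply: connect1; rewrite /= !AB.
Qed.

Lemma chi_components A k : A != set0 ->
  (forall b, b \in A -> chi e (component A b) <= k) -> chi e A <= k.
Proof.
case/set0Pn => b0 Ab0 comp_le.
apply: (@chi_blocks T e A (component A) k) => //.
- exact: leq_trans (chi_gt0 b0 _ _) (comp_le b0 Ab0).
- exact: mem_component.
- move=> x y Ax Ay xy; apply/esym/component_eq.
  exact: component_closed (mem_component Ax) Ay xy.
Qed.

Lemma component_exit A N b y : b \in A :\: N -> y \in N -> y \in component A b ->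
  exists p q, [/\ p \in component (A :\: N) b, q \in A :&: N & e p q].
Proof.
move=> bAN Ny /setIdP [_ by_]; set B := component (A :\: N) b.
have [/exists_inP [p Bp /exists_inP [q ANq pq]] | no_exit] :=
  boolP [exists p in B, [exists q in A :&: N, e p q]]; first by exists p, q.
have B_closed a z : a \in B -> induced_rel A a z -> z \in B.
  move=> Ba /and3P [_ Az az]; apply: (component_closed Ba _ az).
  rewrite inE Az andbT; apply: contra no_exit => Nz.
  by apply/exists_inP; exists a => //; apply/exists_inP; exists z; rewrite // inE Nz Az.
have /(subsetP (component_sub _ _)) := connect_forward_closed B_closed (mem_component bAN) by_.
by rewrite inE Ny.
Qed.

End Components.

Section Levels.
Variables (T : finType) (n : nat) (W : 'I_n -> {set T}).
Hypothesis hW : grading W.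

Definition level x : nat := if [pick i | x \in W i] is Some i then val i else 0.

Definition later k := [set x | k < level x].

Definition level_set k := [set x | level x == k].

Lemma levelE i x : x \in W i -> level x = i.
Proof.
rewrite /level => Wix; case: pickP => [j Wjx | /(_ i)]; last by rewrite Wix.
by case: (eqVneq j i) => [-> // | ji]; rewrite (disjointFr (hW.1 _ _ ji) Wjx) in Wix.
Qed.

Lemma mem_part x : exists i : 'I_n, x \in W i.
Proof.
have : x \in [set: T] by rewrite inE.
by rewrite -hW.2 => /bigcupP [i _ Wix]; exists i.
Qed.

Lemma level_lt x : level x < n.
Proof. by have [i /levelE ->] := mem_part x. Qed.

Lemma earlierE u x : earlier W u x <-> level u < level x.
Proof.
split=> [[i [j [ij /levelE -> /levelE ->]]] // |].
have [i Wiu] := mem_part u; have [j Wjx] := mem_part x.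
by rewrite (levelE Wiu) (levelE Wjx); exists i, j.
Qed.

Lemma earlier_later u k x : level u <= k -> x \in later k -> earlier W u x.
Proof. by rewrite inE earlierE; apply: leq_ltn_trans. Qed.

Lemma level_setE (i : 'I_n) : level_set i = W i.
Proof.
apply/setP => x; rewrite inE; apply/eqP/idP => [xi | /levelE //].
by have [j Wjx] := mem_part x; rewrite (levelE Wjx) in xi; rewrite -(val_inj xi).
Qed.

End Levels.

Section BalancedEdges.
Variables (T : finType) (e : rel T).
Hypothesis e_sym : symmetric e.
Variables (w c n : nat) (W : 'I_n -> {set T}).
Hypothesis hW : w_colourable_grading e w W.
Variables (VH : {set T}) (h : rel T).
Hypothesis hH : subgraph e VH h.
Hypothesis nbr_agree : forall u v (X : {set T}), h u v -> induced_connected e X ->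
  (forall x, x \in X -> earlier W u x /\ earlier W v x) -> c < chi e X ->
  has_nbr_in e u X = has_nbr_in e v X.

Let W_grading : grading W := proj1 hW.

Local Notation level := (level W).
Local Notation later := (later W).

Definition nbrs u := [set y | e u y].

Definition away u k := later k :\: nbrs u.

Definition heavy u k b := c < chi e (component e (away u k) b).

Definition anchor_set u k :=
  [set x in later k | e u x && [exists b in away u k, e x b && heavy u k b]].

Lemma heavy_component_avoids u v k b : h u v -> level u <= k -> level v <= k ->
  b \in away u k -> heavy u k b -> component e (away u k) b \subset away v k.
Proof.
move=> huv uk vk bu heavy_b; set B := component e (away u k) b.
have B_away : B \subset away u k := component_sub _ _ _.
have B_later x : x \in B -> x \in later k.
  by move/(subsetP B_away); rewrite inE => /andP [].
have no_u : has_nbr_in e u B = false.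
  by apply/exists_inP => [[x /(subsetP B_away)]]; rewrite !inE => /andP [/negbTE ->].
have no_v : has_nbr_in e v B = false.
  rewrite -no_u; apply/esym/nbr_agree => //; first exact: component_connected.
  by move=> x /B_later xk; split; apply: (earlier_later W_grading) xk.
apply/subsetP => x Bx; rewrite /away in_setD B_later // andbT inE.
by apply: contraFN no_v => vx; apply/exists_inP; exists x.
Qed.

Lemma heavy_component_eq u v k b : h u v -> level u <= k -> level v <= k ->
  b \in away u k -> heavy u k b ->
  component e (away u k) b = component e (away v k) b.
Proof.
move=> huv uk vk bu heavy_b.
have Bv := heavy_component_avoids huv uk vk bu heavy_b.
have bB := mem_component e bu.
have bv : b \in away v k := subsetP Bv b bB.
have sub := connected_sub_component (component_connected e_sym bu) Bv bB.
apply/eqP; rewrite eqEsubset sub /=.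
have heavy_v : heavy v k b := leq_trans heavy_b (chi_subset _ sub).
have hvu : h v u by rewrite hH.2.
apply: connected_sub_component (component_connected e_sym bv) _ (mem_component e bv).
exact: heavy_component_avoids hvu vk uk bv heavy_v.
Qed.

Lemma anchor_set_sub u v k : h u v -> level u <= k -> level v <= k ->
  anchor_set u k \subset anchor_set v k.
Proof.
move=> huv uk vk; apply/subsetP => x.
case/setIdP=> xk /andP [ux /exists_inP [b bu /andP [xb heavy_b]]].
have E := heavy_component_eq huv uk vk bu heavy_b.
have bv : b \in away v k.
  by apply: (subsetP (component_sub e _ b)); rewrite -E; apply: mem_component.
apply/setIdP; split=> //; apply/andP; split; last first.
  by apply/exists_inP; exists b => //; rewrite xb /heavy -E.
apply: contraT => vx; have xv : x \in away v k by rewrite /away in_setD xk inE vx.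
have : x \in component e (away u k) b.
  by rewrite E; apply: component_closed (mem_component e bv) xv _; rewrite e_sym.
by move/(subsetP (component_sub _ _ _)); rewrite /away in_setD inE ux.
Qed.

Lemma anchor_set_eq u v k : h u v -> level u <= k -> level v <= k ->
  anchor_set u k = anchor_set v k.
Proof.
move=> huv uk vk; have hvu : h v u by rewrite hH.2.
by apply/eqP; rewrite eqEsubset; apply/andP; split; apply: anchor_set_sub.
Qed.

Definition anchor_levels v : pred 'I_n :=
  [pred k : 'I_n | (level v <= k) && (anchor_set v k != set0)].

Definition anchored := [set v | [exists k, anchor_levels v k]].

Definition anchor_level v := \max_(k | anchor_levels v k) val k.

Definition anchor v := odflt v [pick x in anchor_set v (anchor_level v)].

Lemma anchor_levelP v : v \in anchored ->
  exists2 k : 'I_n, anchor_levels v k & anchor_level v = k.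
Proof.
rewrite inE => /existsP [k0 vk0].
have [|k vk kE] := @eq_bigmax_cond _ (anchor_levels v) val; last by exists k.
by apply/card_gt0P; exists k0.
Qed.

Lemma anchor_mem v : v \in anchored -> anchor v \in anchor_set v (anchor_level v).
Proof.
move=> /anchor_levelP [k /andP [_ /set0Pn [y vy]] kE]; rewrite /anchor kE.
by case: pickP => [// | /(_ y)]; rewrite /= vy.
Qed.

Lemma mem_closed_nbhd_anchor v : v \in anchored -> v \in closed_nbhd e (anchor v).
Proof. by move=> /anchor_mem; rewrite !inE => /and3P [_ va _]; rewrite e_sym va orbT. Qed.

Lemma anchor_levels_edge u v (k : 'I_n) : h u v -> level u <= level v -> level v <= k ->
  anchor_levels u k = anchor_levels v k.
Proof.
move=> huv uv vk; have uk := leq_trans uv vk.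
by rewrite /anchor_levels /= (anchor_set_eq huv uk vk) uk vk.
Qed.

Lemma anchor_edge u v : h u v -> level u <= level v -> v \in anchored ->
  u \in anchored /\ anchor u = anchor v.
Proof.
move=> huv uv /[dup] Av /anchor_levelP [kv vkv kvE].
have v_le_kv : level v <= anchor_level v by rewrite kvE; case/andP: vkv.
have ukv : anchor_levels u kv.
  by have := anchor_levels_edge huv uv (_ : level v <= kv); rewrite -kvE => ->.
have Au : u \in anchored by rewrite inE; apply/existsP; exists kv.
split=> //; have [ku uku kuE] := anchor_levelP Au.
have kv_le_ku : anchor_level v <= anchor_level u.
  by rewrite kvE; apply: leq_bigmax_cond.
have v_le_ku : level v <= ku by rewrite -kuE (leq_trans v_le_kv).
have ku_le_kv : anchor_level u <= anchor_level v.
  by rewrite kuE; apply: leq_bigmax_cond; rewrite -(anchor_levels_edge huv uv v_le_ku).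
have kuv : anchor_level u = anchor_level v by apply/anti_leq/andP.
have same_set := anchor_set_eq huv (leq_trans uv v_le_kv) v_le_kv.
have v_anchor := anchor_mem Av.
rewrite /anchor kuv same_set; case: pickP => [x _ // | no_anchor].
by have := no_anchor (anchor v); rewrite /= v_anchor.
Qed.

Lemma anchor_eq u v : h u v -> u \in anchored -> v \in anchored -> anchor u = anchor v.
Proof.
move=> huv Au Av; case: (leqP (level u) (level v)) => [uv | /ltnW vu].
  by case: (anchor_edge huv uv Av).
have hvu : h v u by rewrite hH.2.
by case: (anchor_edge hvu vu Au).
Qed.

Definition covered_at x i := (x \in later i) &&
  [exists u, [&& u \notin anchored, level u == i &
                 has_nbr_in e u (component e (later i) x)]].

Definition covered := [set x | has (covered_at x) (iota 0 n)].

Definition cover_level x := find (covered_at x) (iota 0 n).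

Definition cover_comp x := component e (later (cover_level x)) x.

Lemma cover_levelP x : x \in covered -> covered_at x (cover_level x).
Proof.
rewrite inE => has_x.
have lt_n : cover_level x < n by move: has_x; rewrite has_find size_iota.
by have := nth_find 0 has_x; rewrite nth_iota // add0n.
Qed.

Lemma cover_level_min x j : j < cover_level x -> ~~ covered_at x j.
Proof.
move=> j_lt; have j_n : j < n.
  by apply: leq_trans j_lt _; rewrite -[n in _ <= n](size_iota 0 n) find_size.
by have := before_find 0 j_lt; rewrite nth_iota // add0n => ->.
Qed.

Lemma cover_comp_edge x y : x \in covered -> y \in covered -> e x y ->
  cover_comp x = cover_comp y.
Proof.
wlog le_xy : x y / cover_level x <= cover_level y.
  move=> wlog_le Cx Cy xy; case: (leqP (cover_level x) (cover_level y)) => [|/ltnW] le.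
    exact: wlog_le.
  by apply/esym/wlog_le; rewrite // e_sym.
move=> /cover_levelP /andP [xi /existsP [u /and3P [Au ui u_nbr]]] /cover_levelP /andP [yj _] xy.
rewrite /cover_comp; set i := cover_level x in xi ui u_nbr le_xy *.
have yi : y \in later i by move: yj; rewrite !inE; apply: leq_ltn_trans le_xy.
have same_comp := component_eq e_sym (component_closed (mem_component e xi) yi xy).
have y_at_i : covered_at y i.
  by rewrite /covered_at yi same_comp; apply/existsP; exists u; rewrite Au ui.
have yi_le : cover_level y <= i.
  by rewrite leqNgt; apply: contraTN y_at_i; apply: cover_level_min.
rewrite (_ : cover_level y = i); first exact: esym same_comp.
exact/anti_leq/andP.
Qed.

Lemma chi_off_nbrs_component_le u i x b : u \notin anchored -> level u = i ->
  has_nbr_in e u (component e (later i) x) ->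
  b \in component e (later i) x :\: nbrs u ->
  chi e (component e (component e (later i) x :\: nbrs u) b) <= c.
Proof.
move=> Au ui /exists_inP [y0 Cy0 uy0] bCu; set C := component e (later i) x in Cy0 bCu *.
rewrite leqNgt; apply/negP => heavy_b; move/negP: Au; apply.
have [Nb Cb] : b \notin nbrs u /\ b \in C by apply/andP; rewrite -in_setD.
have C_later : C \subset later i := component_sub _ _ _.
have b_away : b \in away u i by rewrite /away in_setD Nb (subsetP C_later).
have y0_comp : y0 \in component e (later i) b by rewrite (component_eq e_sym Cb).
have Ny0 : y0 \in nbrs u by rewrite inE.
have [p [q [p_comp /setIP [q_later Nq] pq]]] := component_exit b_away Ny0 y0_comp.
have heavy_p : heavy u i p.
  rewrite /heavy (component_eq e_sym p_comp); apply: leq_trans heavy_b (chi_subset _ _).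
  by apply: component_subset; apply: setSD.
have p_away : p \in away u i := subsetP (component_sub _ _ _) p p_comp.
rewrite inE; apply/existsP; exists (Ordinal (level_lt W_grading u)).
rewrite /anchor_levels /= leqnn ui /=.
apply/set0Pn; exists q; apply/setIdP; split=> //; rewrite inE in Nq; rewrite Nq /=.
by apply/exists_inP; exists p => //; rewrite e_sym pq.
Qed.

Lemma chi_component_free_nbr u i x : u \notin anchored -> level u = i ->
  has_nbr_in e u (component e (later i) x) ->
  chi e (component e (later i) x) <= c + chi1 e.
Proof.
move=> Au ui u_nbr; have light := chi_off_nbrs_component_le Au ui u_nbr.
set C := component e (later i) x in light *.
have C_split : C \subset closed_nbhd e u :|: (C :\: nbrs u).
  apply/subsetP => y Cy; rewrite /closed_nbhd in_setU in_setD Cy andbT !inE.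
  by case: (e u y); rewrite ?orbT.
have [C_near | C_far] := eqVneq (C :\: nbrs u) set0.
  rewrite C_near setU0 in C_split; apply: leq_trans (chi_subset _ C_split) _.
  exact: leq_trans (chi_closed_nbhd_le e u) (leq_addl _ _).
apply: leq_trans (chi_subset _ C_split) _; rewrite addnC.
apply: leq_trans (chi_setU _ _ _) (leq_add (chi_closed_nbhd_le e u) _).
exact: (chi_components e_sym C_far light).
Qed.

Lemma chi_cover_comp x : x \in covered -> chi e (cover_comp x) <= c + chi1 e.
Proof.
case/cover_levelP/andP => _ /existsP [u /and3P [Au /eqP ui u_nbr]].
exact: chi_component_free_nbr Au ui u_nbr.
Qed.

Lemma covered_later_nbr u v : u \notin anchored -> e u v -> level u < level v ->
  v \in covered.
Proof.
move=> Au uv lt_uv; rewrite inE; apply/hasP; exists (level u).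
  by rewrite mem_iota add0n level_lt.
have v_later : v \in later (level u) by rewrite inE.
rewrite /covered_at v_later /=; apply/existsP; exists u; rewrite Au eqxx /=.
by apply/exists_inP; exists v; rewrite ?mem_component.
Qed.

Lemma h_subrel : subrel h e.
Proof. by move=> x y /(proj1 hH) []. Qed.

Variable t0 : T.

Lemma chi_covered : chi h covered <= c + chi1 e.
Proof.
apply: (@chi_blocks _ h covered cover_comp) => [|x Cx|x y Cx Cy hxy|x Cx].
- by rewrite addn_gt0 (chi1_gt0 t0) orbT.
- by have /andP [xi _] := cover_levelP Cx; apply: mem_component.
- exact: cover_comp_edge Cx Cy (h_subrel hxy).
- exact: leq_trans (chi_mono h_subrel (subxx _)) (chi_cover_comp Cx).
Qed.

Lemma chi_anchored : chi h anchored <= chi1 e.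
Proof.
apply: (@chi_blocks _ h anchored (fun x => closed_nbhd e (anchor x))).
- exact: chi1_gt0 t0 e.
- exact: mem_closed_nbhd_anchor.
- by move=> x y Ax Ay hxy; rewrite (anchor_eq hxy Ax Ay).
- by move=> x _; apply: leq_trans (chi_mono h_subrel (subxx _)) (chi_closed_nbhd_le e _).
Qed.

Lemma chi_unanchored_uncovered : chi h (~: (covered :|: anchored)) <= w.
Proof.
have [i0 t0_i0] := mem_part W_grading t0.
apply: (@chi_blocks _ h _ (fun x => level_set W (level x))) => [|x _|x y|x _].
- exact: leq_trans (chi_gt0 t0 e (W i0)) (proj2 hW i0).
- by rewrite inE.
- move=> Rx Ry /h_subrel xy; apply: congr1.
  (* One vertex at a time: rewriting [inE] in both memberships at once sends
     unification into unfolding [covered] and [anchored]. *)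
  have /norP [Cx Ax] : ~~ ((x \in covered) || (x \in anchored)) by rewrite -in_setU -in_setC.
  have /norP [Cy Ay] : ~~ ((y \in covered) || (y \in anchored)) by rewrite -in_setU -in_setC.
  case: (ltngtP (level x) (level y)) => // [lt_xy | lt_yx].
    by rewrite (covered_later_nbr Ax xy lt_xy) in Cy.
  by rewrite e_sym in xy; rewrite (covered_later_nbr Ay xy lt_yx) in Cx.
- have [i Wix] := mem_part W_grading x; rewrite (levelE W_grading Wix) level_setE //.
  exact: leq_trans (chi_mono h_subrel (subxx _)) (proj2 hW i).
Qed.

Lemma chi_subgraph_le : chi h VH <= c + chi1 e + chi1 e + w.
Proof.
have VH_split : VH \subset covered :|: anchored :|: ~: (covered :|: anchored).
  by rewrite setUCr subsetT.
apply: leq_trans (chi_subset _ VH_split) _.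
apply: leq_trans (chi_setU _ _ _) (leq_add _ chi_unanchored_uncovered).
exact: leq_trans (chi_setU _ _ _) (leq_add chi_covered chi_anchored).
Qed.

End BalancedEdges.

Unset Implicit Arguments.

Theorem mainTheorem3 (T : finType) (e : rel T)
  (e_sym : symmetric e) (e_irr : irreflexive e)
  (w c n : nat) (W : 'I_n -> {set T})
  (hW : w_colourable_grading e w W)
  (VH : {set T}) (h : rel T) (hH : subgraph e VH h)
  (hchi : chi h VH > w + 2 * (c + chi1 e)) :
  exists u v : T, exists X : {set T},
    [/\ h u v,
        induced_connected e X,
        (forall x, x \in X -> earlier W u x /\ earlier W v x),
        has_nbr_in e u X (+) has_nbr_in e v X
      & chi e X > c].
Proof.
(* [colourableb] ignores loops. *)
apply: NNPP => no_edge.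
have nbr_agree u v (X : {set T}) : h u v -> induced_connected e X ->
    (forall x, x \in X -> earlier W u x /\ earlier W v x) -> c < chi e X ->
    has_nbr_in e u X = has_nbr_in e v X.
  move=> huv X_conn X_later X_heavy.
  case xor_uv: (has_nbr_in e u X (+) has_nbr_in e v X); first by case: no_edge; exists u, v, X.
  by move: xor_uv; case: has_nbr_in; case: has_nbr_in.
have [T_empty | /card_gt0P [t0 _]] := posnP #|T|.
  by move: hchi; rewrite chi_eq0.
have := chi_subgraph_le e_sym hW hH nbr_agree t0.
by move: hchi; lia.
Qed.
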